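(* Fix $\tau>0$, and assume that for every $\lambda\in\Lambda$ the problem $\max_{\pi\in\Pi}\mathcal L_\tau(\pi,\lambda)$ has exactly one maximizer $\pi^*_{\tau,\lambda}$. Assume the CMDP has an optimal policy $\pi^*$ with optimal value $V_0^*(\rho)=V_0^{\pi^*}(\rho)$. Let $\lambda\in\Lambda$. Then $$V_0^*(\rho)-V_0^{\pi^*_{\tau,\lambda}}(\rho)\le\langle\lambda,\nabla d_\tau(\lambda)\rangle+\tau\mathcal H(\pi^*_{\tau,\lambda}),$$ $$\bigl\|[c-V^{\pi^*_{\tau,\lambda}}(\rho)]_+\bigr\|_2=\bigl\|[-\nabla d_\tau(\lambda)]_+\bigr\|_2.$$
   Context: Finite MDP with state space $\mathcal S$, action space $\mathcal A$, transition kernel $\mathrm P$, discount $\gamma\in(0,1)$, initial distribution $\rho$, positive finite rewards $r_0,\dots,r_m$, $r_{0,\max}=\max_{s,a}r_0(s,a)$. $\Pi$ = stationary policies. $V_i^\pi(\rho)=\mathbb{E}[\sum_{t\ge0}\gamma^tr_i(s_t,a_t)]$ with $s_0\sim\rho$, $a_t\sim\pi(\cdot\mid s_t)$, $s_{t+1}\sim\mathrm P(\cdot\mid s_t,a_t)$; $V^\pi(\rho)=(V_1^\pi(\rho),\dots,V_m^\pi(\rho))^\top$; thresholds $c\in\mathbb{R}^m$. The CMDP is $\max_{\pi\in\Pi}V_0^\pi(\rho)$ s.t. $V_i^\pi(\rho)\ge c_i$, $i=1,\dots,m$. Discounted entropy $\mathcal H(\pi)=-\mathbb{E}[\sum_t\gamma^t\log\pi(a_t\mid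 s_t)]$. $\mathcal L_\tau(\pi,\lambda)=V_0^\pi(\rho)+\langle\lambda,V^\pi(\rho)-c\rangle+\tau\mathcal H(\pi)$, $d_\tau(\lambda)=\max_{\pi\in\Pi}\mathcal L_\tau(\pi,\lambda)$ (which is differentiable on $\Lambda$ under the uniqueness hypothesis). $[x]_+$ is the componentwise positive part. For a Slater constant $\xi>0$ (i.e. some $\pi_\xi$ has $V_i^{\pi_\xi}(\rho)\ge c_i+\xi$ for all $i$), $B_\lambda=\frac{r_{0,\max}+\log|\mathcal A|}{(1-\gamma)\xi}$ and $\Lambda=\{\lambda\in\mathbb{R}^m_+:\|\lambda\|_1\le B_\lambda\}$. *)

From HB Require Import structures.
From mathcomp Require Import all_boot all_order all_algebra.
From mathcomp Require Import all_classical all_reals all_analysis.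
Set Implicit Arguments.
Unset Strict Implicit.
Unset Printing Implicit Defensive.
Import Order.TTheory GRing.Theory Num.Theory.
Import numFieldNormedType.Exports.
Local Open Scope classical_set_scope.
Local Open Scope ring_scope.

Section CMDP.
Variables (R : realType) (S A : finType).

(* A stationary (randomized) policy pi(a|s) := pi s a. *)
Definition is_policy (pi : S -> A -> R) : Prop :=
  forall s, (forall a, 0 <= pi s a) /\ \sum_a pi s a = 1.

Definition is_distr (rho : S -> R) : Prop :=
  (forall s, 0 <= rho s) /\ \sum_s rho s = 1.

(* A transition kernel P(s'|s,a) := P s a s'. *)
Definition is_kernel (P : S -> A -> S -> R) : Prop :=
  forall s a, is_distr (P s a).

Fixpoint state_law (P : S -> A -> S -> R) (pi : S -> A -> R) (rho : S -> R)
    (t : nat) : S -> R :=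
  match t with
  | O => rho
  | t'.+1 => fun s' =>
      \sum_s \sum_a state_law P pi rho t' s * pi s a * P s a s'
  end.

(* E[ sum_t gamma^t f(s_t, a_t) ] (written by linearity of expectation). *)
Definition disc_sum (P : S -> A -> S -> R) (gamma : R) (rho : S -> R)
    (pi : S -> A -> R) (f : S -> A -> R) : R :=
  limn (series (fun t : nat =>
     gamma ^+ t * \sum_s \sum_a state_law P pi rho t s * pi s a * f s a)).

Definition value P gamma rho pi (r : S -> A -> R) : R :=
  disc_sum P gamma rho pi r.

(* Discounted entropy H(pi) = - E[ sum_t gamma^t log pi(a_t|s_t) ]
   (with ln 0 = 0, so the convention 0 log 0 = 0 holds). *)
Definition entropy P gamma rho (pi : S -> A -> R) : R :=
  disc_sum P gamma rho pi (fun s a => - ln (pi s a)).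

Definition lagr P gamma rho (r0 : S -> A -> R) m (r : 'I_m -> S -> A -> R)
    (c : 'rV[R]_m) (tau : R) (pi : S -> A -> R) (lam : 'rV[R]_m) : R :=
  value P gamma rho pi r0
  + \sum_(i < m) lam 0 i * (value P gamma rho pi (r i) - c 0 i)
  + tau * entropy P gamma rho pi.

Definition dual P gamma rho r0 m r c tau (lam : 'rV[R]_m) : R :=
  sup [set lagr P gamma rho r0 r c tau pi lam | pi in is_policy].

End CMDP.

Definition grad (R : realType) m (f : 'rV[R]_m -> R) (x : 'rV[R]_m)
  : 'rV[R]_m := \row_i ('D_(delta_mx 0 i) f x).

Definition pos_part (R : realType) (x : R) : R := Num.max x 0.

Definition norm2 (R : realType) m (v : 'rV[R]_m) : R :=
  Num.sqrt (\sum_(i < m) v 0 i ^+ 2).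

(* Write L_tau(pi, lam) = f pi + <lam, w pi> with f = V_0 + tau H and w = V - c.
   Viewed in the product topology, the policies form a compact set on which V_i
   and H are continuous: they are uniform limits of their truncated discounted
   sums, and for H this uses the continuity of x ln x at 0.  Danskin's argument
   then differentiates the dual function d_tau = sup_pi L_tau(pi, .), a
   supremum of affine functions, at a point lam with a unique maximizer pil:
   the difference quotient in direction e_i is squeezed between w_i pil and
   w_i pi + h for a near-maximizer pi of the shifted Lagrangian, and compactness
   plus uniqueness force near-maximizers to have w_i close to w_i pil.  Hence
   grad d_tau(lam) = V^pil(rho) - c, which is the second identity; the first
   follows from L_tau(pistar, lam) <= L_tau(pil, lam), <lam, V^pistar - c> >= 0 and
   H(pistar) >= 0. *)

From HB Require Import structures.
From mathcomp Require Import all_boot all_order all_algebra.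
From mathcomp Require Import all_classical all_reals all_analysis.
From mathcomp Require Import ring lra.
Import Order.TTheory GRing.Theory Num.Theory.
Import numFieldNormedType.Exports.
Local Open Scope classical_set_scope.
Local Open Scope ring_scope.

Section continuous_pointwise.
Context {K : numFieldType} {T : topologicalType}.
Implicit Types f g : T -> K.

Lemma continuous_addf f g : continuous f -> continuous g -> continuous (fun x => f x + g x).
Proof. by move=> f_cont g_cont x; exact: (continuousD (f_cont x) (g_cont x)). Qed.

Lemma continuous_mulf f g : continuous f -> continuous g -> continuous (fun x => f x * g x).
Proof. by move=> f_cont g_cont x; exact: (continuousM (f_cont x) (g_cont x)). Qed.

Lemma continuous_oppf f : continuous f -> continuous (fun x => - f x).
Proof. by move=> f_cont x; exact: (continuousN (f_cont x)). Qed.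

Lemma continuous_sumf {I : Type} (r : seq I) (P : pred I) (F : I -> T -> K) :
  (forall i, P i -> continuous (F i)) -> continuous (fun x => \sum_(i <- r | P i) F i x).
Proof. by apply: continuous_big; exact: add_continuous. Qed.

End continuous_pointwise.

Section geometric_domination.
Context {R : realType} {gamma M : R}.
Hypotheses (gamma_gt0 : 0 < gamma) (gamma_lt1 : gamma < 1).

Let gamma_ge0 : 0 <= gamma. Proof. exact: ltW. Qed.
Let gamma_norm_lt1 : `|gamma| < 1. Proof. by rewrite gtr0_norm. Qed.

Lemma geometric_partial_sum_le (n k : nat) :
  \sum_(n <= j < k) gamma ^+ j <= gamma ^+ n / (1 - gamma).
Proof.
have [nk|kn] := leqP n k; last first.
  by rewrite big_geq ?(ltnW kn) // divr_ge0 ?exprn_ge0 // subr_ge0; exact: ltW.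
rewrite -(subnKC nk) geometric_partial_tail.
by apply: geometric_le_lim; rewrite ?exprn_ge0.
Qed.

Section dominated_series.
Context {v : R ^nat} (v_le : forall t, `|v t| <= M * gamma ^+ t).

Let M_ge0 : 0 <= M.
Proof. by have := v_le 0; rewrite expr0 mulr1; exact: le_trans. Qed.

Lemma is_cvg_series_geometric_dominated : cvgn (series v).
Proof.
apply: normed_cvg; apply: (@series_le_cvg _ _ (geometric M gamma)) => //=.
- by move=> n; rewrite mulr_ge0 // exprn_ge0.
- exact: is_cvg_geometric_series.
Qed.

Lemma lim_series_tail_le n :
  `|limn (series v) - series v n| <= M / (1 - gamma) * gamma ^+ n.
Proof.
have tail_cvg : (fun k => `|series v k - series v n|) @ \oo -->
    `|limn (series v) - series v n|.
  by apply: cvg_norm; apply: cvgB; [exact: is_cvg_series_geometric_dominated | exact: cvg_cst].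
apply: (cvgr_to_le tail_cvg); near=> k.
have nk : (n <= k)%N by near: k; exists n.
rewrite sub_series_geq // (le_trans (ler_norm_sum _ _ _)) //.
rewrite (le_trans (ler_sum _ (fun j _ => v_le j))) // -mulr_sumr -mulrA.
by rewrite [_^-1 * _]mulrC ler_wpM2l // geometric_partial_sum_le.
Unshelve. all: by end_near.
Qed.

End dominated_series.

Lemma continuous_series_geometric_dominated (T : topologicalType) (K : set T)
    (u : nat -> T -> R) :
  (forall t, continuous (u t)) ->
  (forall x, K x -> forall t, `|u t x| <= M * gamma ^+ t) ->
  {within K, continuous (fun x => limn (series (u ^~ x)))}.
Proof.
move=> u_cont u_le.
(* Weierstrass M-test: the partial sums converge uniformly on K. *)
apply: (@uniform_limit_continuous_subspace _ _ _
  ((fun N x => series (u ^~ x) N) @ \oo)).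
- exists 0%N => // N _; apply: continuous_subspaceT; rewrite /series /=.
  by apply: continuous_sumf => t _; exact: u_cont.
apply/uniform_restrict_cvg => U /=; rewrite !uniform_nbhsT.
case/nbhs_ex => e /= ballU; apply: filterS; first by move=> ?; exact: ballU.
have [N0 _ tail] : \forall N \near \oo, `|geometric (M / (1 - gamma)) gamma N| < e%:num.
  exact: cvgr0_norm_lt (cvg_geometric _ gamma_norm_lt1) _ (gt0 e).
exists N0 => // N /tail tailN x; rewrite /patch; case: ifPn => // /set_mem Kx.
rewrite /ball /=; apply: le_lt_trans (lim_series_tail_le (u_le x Kx) N) _.
by apply: le_lt_trans tailN; exact: ler_norm.
Qed.

End geometric_domination.

Section xlnx.
Context {R : realType}.

Lemma xNlnx_ge0_le1 {x : R} : 0 <= x <= 1 -> 0 <= x * - ln x <= 1.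
Proof.
case/andP => x_ge0 x_le1; rewrite mulr_ge0 ?oppr_ge0 ?ln_le0 //=.
have [->|x_neq0] := eqVneq x 0; first by rewrite mul0r.
have x_gt0 : 0 < x by rewrite lt_neqAle eq_sym x_neq0.
rewrite -lnV ?posrE // -(mulfV x_neq0) ler_pM2l //.
by apply/ltW/ln_sublinear; rewrite invr_gt0.
Qed.

Lemma xNlnx_le {y c : R} : 0 < y -> 0 < c -> y * - ln y <= c + y * `|ln c|.
Proof.
move=> y_gt0 c_gt0; have := ln_sublinear (divr_gt0 c_gt0 y_gt0).
rewrite ln_div ?posrE // => lt_ln.
have le_Nln : - ln y <= c / y + `|ln c|.
  by rewrite -normrN in lt_ln *; have := ler_norm (- ln c); lra.
by have := ler_wpM2l (ltW y_gt0) le_Nln; rewrite mulrDr mulrCA mulfV ?gt_eqF ?mulr1.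
Qed.

Lemma continuous_xlnx : continuous (fun x : R => x * ln x).
Proof.
move=> x; have [x_lt0|x_gt0|->] := ltgtP x 0.
- (* ln vanishes on ]-oo, 0], so x ln x is locally constant there. *)
  apply: (near_cst_continuous 0); near=> y.
  have y_lt0 : y < 0 by near: y; exact: lt_nbhsl.
  by rewrite ln0 ?mulr0 //; exact: ltW.
- by apply: continuousM; [exact: cvg_id | exact: continuous_ln].
apply/cvgrPdist_le => e e_gt0.
pose c := e / 2; have c_gt0 : 0 < c by rewrite divr_gt0.
near=> y; rewrite mul0r sub0r normrN.
have [y_le0|y_gt0] := leP y 0; first by rewrite ln0 // mulr0 normr0; exact: ltW.
have y_lt1 : y < 1 by near: y; exact: lt_nbhsl.
have y_small : y * (`|ln c| + 1) < c.
  by rewrite -ltr_pdivlMr ?ltr_wpDl //; near: y; apply: lt_nbhsl; rewrite divr_gt0 ?ltr_wpDl.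
have ylny_le0 : y * ln y <= 0 by rewrite mulr_ge0_le0 ?ln_le0 //; exact: ltW.
rewrite ler0_norm // -mulrN; apply: le_trans (xNlnx_le y_gt0 c_gt0) _.
by rewrite mulrDr mulr1 in y_small; rewrite /c in y_small *; lra.
Unshelve. all: by end_near.
Qed.

End xlnx.

Lemma distr_ge0_le1 {R : realType} {T : finType} {mu : T -> R} x :
  is_distr mu -> 0 <= mu x <= 1.
Proof. by case=> mu_ge0 <-; rewrite mu_ge0 /= (bigD1 x) //= lerDl sumr_ge0. Qed.

Section policy_space.
Context {R : realType} {S A : finType}.

Definition policy_space := {ptws S -> {ptws A -> R}}.

Definition policies : set policy_space := @is_policy R S A.

Lemma continuous_policy_eval s a : continuous (fun p : policy_space => p s a).
Proof.
move=> p; apply: (@continuous_comp policy_space {ptws A -> R} R (fun p => p s) (fun q => q a)).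
  exact: (@proj_continuous S (fun=> {ptws A -> R})).
exact: (@proj_continuous A (fun=> R)).
Qed.

Lemma closed_policies : closed policies.
Proof.
have -> : policies = \bigcap_s (\bigcap_a [set p : policy_space | 0 <= p s a]
                                  `&` [set p | \sum_a p s a = 1]).
  apply/seteqP; split => [p pP s _ | p pP s].
    by have [p_ge0 p_sum1] := pP s; split => // a _; exact: p_ge0.
  by have [p_ge0 p_sum1] := pP s I; split => // a; exact: p_ge0.
apply: closed_bigI => s _; apply: closedI.
  apply: closed_bigI => a _.
  exact: (continuous_closedP _).1 (continuous_policy_eval s a) _ (@closed_ge R 0).
have sum_cont : continuous (fun p : policy_space => \sum_a p s a).
  by apply: continuous_sumf => a _; exact: continuous_policy_eval.
exact: (continuous_closedP _).1 sum_cont _ (@closed_eq R 1).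
Qed.

Lemma compact_policies : compact policies.
Proof.
pose box := [set p : policy_space | forall s a, `[0, 1]%classic (p s a)].
apply: (@subclosed_compact _ _ box closed_policies).
  have := @tychonoff S (fun=> {ptws A -> R}) (fun=> [set q | forall a, `[0, 1]%classic (q a)]).
  apply => s; apply: (@tychonoff A (fun=> R) (fun=> `[0, 1]%classic)) => a.
  exact: segment_compact.
by move=> p pP s a /=; rewrite in_itv /= distr_ge0_le1.
Qed.

End policy_space.

Section discounted_sums.
Context {R : realType} {S A : finType} (P : S -> A -> S -> R) (gamma : R) (rho : S -> R).
Hypotheses (P_kernel : is_kernel P) (gamma_gt0 : 0 < gamma) (gamma_lt1 : gamma < 1)
  (rho_distr : is_distr rho).

Let gamma_ge0 : 0 <= gamma. Proof. exact: ltW. Qed.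

Local Notation policy := (@policy_space R S A).

Lemma state_law_distr {p : S -> A -> R} t : is_policy p -> is_distr (state_law P p rho t).
Proof.
move=> pP; elim: t => [|t [law_ge0 law_sum1]] //=; split.
  move=> s'; apply: sumr_ge0 => s _; apply: sumr_ge0 => a _.
  by rewrite !mulr_ge0 //; [exact: (pP s).1 | exact: (P_kernel s a).1].
rewrite exchange_big -[RHS]law_sum1; apply: eq_bigr => s _.
rewrite exchange_big -[RHS]mulr1 -(pP s).2 mulr_sumr; apply: eq_bigr => a _.
by rewrite -mulr_sumr (P_kernel s a).2 mulr1.
Qed.

Lemma continuous_state_law t s :
  continuous (fun p : policy => state_law P p rho t s).
Proof.
elim: t s => [s|t IH s] /=; first exact: cst_continuous.
apply: continuous_sumf => s0 _; apply: continuous_sumf => a _.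
apply: continuous_mulf; last exact: cst_continuous.
by apply: continuous_mulf; [exact: IH | exact: continuous_policy_eval].
Qed.

Section policy_dependent_payoff.
Variables (f : policy -> S -> A -> R) (C : S -> A -> R).
Hypotheses (f_cont : forall s a, continuous (fun p : policy => p s a * f p s a))
  (f_le : forall s a {p : policy}, policies p -> `|p s a * f p s a| <= C s a).

Let disc_term t (p : policy) :=
  gamma ^+ t * \sum_s \sum_a state_law P p rho t s * p s a * f p s a.

Let disc_term_le {p} : policies p ->
  forall t, `|disc_term t p| <= (\sum_s \sum_a C s a) * gamma ^+ t.
Proof.
move=> pP t; rewrite normrM [`|gamma ^+ t|]ger0_norm ?exprn_ge0 // mulrC.
rewrite ler_wpM2r ?exprn_ge0 // (le_trans (ler_norm_sum _ _ _)) //.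
apply: ler_sum => s _; rewrite (le_trans (ler_norm_sum _ _ _)) //.
apply: ler_sum => a _; rewrite -mulrA normrM.
have /andP[law_ge0 law_le1] := distr_ge0_le1 s (state_law_distr t pP).
by rewrite ger0_norm // (le_trans _ (f_le s a pP)) // ler_piMl.
Qed.

Lemma is_cvg_disc_sum p : policies p -> cvgn (series (disc_term ^~ p)).
Proof.
by move=> pP; apply: (is_cvg_series_geometric_dominated gamma_gt0 gamma_lt1 (disc_term_le pP)).
Qed.

Lemma continuous_disc_sum :
  {within policies, continuous (fun p => disc_sum P gamma rho p (f p))}.
Proof.
apply: (continuous_series_geometric_dominated gamma_gt0 gamma_lt1) => [t|p pP]; last first.
  exact: disc_term_le.
apply: continuous_mulf; first exact: cst_continuous.
apply: continuous_sumf => s _; apply: continuous_sumf => a _.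
have -> : (fun p : policy => state_law P p rho t s * p s a * f p s a) =
    (fun p => state_law P p rho t s * (p s a * f p s a)).
  by apply/funext => p; rewrite mulrA.
by apply: continuous_mulf; [exact: continuous_state_law | exact: f_cont].
Qed.

End policy_dependent_payoff.

Lemma continuous_value (r : S -> A -> R) :
  {within policies, continuous (fun p => value P gamma rho p r)}.
Proof.
apply: (continuous_disc_sum (fun=> r) (fun s a => `|r s a|)) => s a.
  by apply: continuous_mulf; [exact: continuous_policy_eval | exact: cst_continuous].
move=> p pP; have /andP[p_ge0 p_le1] := distr_ge0_le1 a (pP s).
by rewrite normrM ger0_norm // ler_piMl.
Qed.

Let entropy_term_le s a {p : policy} : policies p -> `|p s a * - ln (p s a)| <= 1.
Proof.
move=> pP; have /andP[term_ge0 term_le1] := xNlnx_ge0_le1 (distr_ge0_le1 a (pP s)).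
by rewrite ger0_norm.
Qed.

Lemma continuous_entropy :
  {within policies, continuous (fun p => entropy P gamma rho p)}.
Proof.
apply: (continuous_disc_sum (fun p s a => - ln (p s a)) (fun _ _ => 1)).
  move=> s a; have -> : (fun p : policy => p s a * - ln (p s a)) =
                       (fun p => - (p s a * ln (p s a))).
    by apply/funext => p; rewrite mulrN.
  apply: continuous_oppf => p.
  apply: (@continuous_comp _ _ _ (fun p : policy => p s a) (fun x => x * ln x)).
    exact: continuous_policy_eval.
  exact: continuous_xlnx.
by move=> s a p pP; exact: (entropy_term_le s a pP).
Qed.

Lemma entropy_ge0 (p : S -> A -> R) : is_policy p -> 0 <= entropy P gamma rho p.
Proof.
move=> pP; apply: limr_ge.
  by apply: (is_cvg_disc_sum (fun p s a => - ln (p s a)) (fun _ _ => 1)).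
near=> n; apply: sumr_ge0 => t _; rewrite mulr_ge0 ?exprn_ge0 //.
apply: sumr_ge0 => s _; apply: sumr_ge0 => a _; rewrite -mulrA mulr_ge0 //.
  by have /andP[] := distr_ge0_le1 s (state_law_distr t pP).
by have /andP[] := xNlnx_ge0_le1 (distr_ge0_le1 a (pP s)).
Unshelve. all: by end_near.
Qed.

End discounted_sums.

Lemma difference_quotient_lt {R : realFieldType} {h a b c : R} :
  h != 0 -> h * a <= c -> c < h * b -> `|h^-1 * c - a| < `|b - a|.
Proof.
move=> h_neq0; rewrite -{1 2}[c](mulVKf h_neq0); set q := h^-1 * c.
have [h_gt0|h_le0] := ltP 0 h.
  rewrite ler_pM2l // ltr_pM2l // => a_le_q q_lt_b.
  by rewrite !ger0_norm ?subr_ge0 //; lra.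
have h_lt0 : h < 0 by rewrite lt_neqAle h_neq0.
rewrite ler_nM2l // ltr_nM2l // => q_le_a b_lt_q.
by rewrite distrC [`|b - a|]distrC !ger0_norm ?subr_ge0 //; lra.
Qed.

Section danskin.
Context {R : realType} {T : topologicalType} {m : nat} (K : set T)
  (f : T -> R) (w : 'I_m -> T -> R).
Hypotheses (K_compact : compact K) (f_cont : {within K, continuous f})
  (w_cont : forall i, {within K, continuous (w i)}).

Definition lagrangian (x : T) (l : 'rV[R]_m) : R := f x + \sum_i l 0 i * w i x.

Definition dual_fun (l : 'rV[R]_m) : R := sup [set lagrangian x l | x in K].

Lemma continuous_lagrangian l : {within K, continuous (lagrangian ^~ l)}.
Proof.
apply: continuous_addf; first exact: f_cont.
apply: continuous_sumf => i _.
by apply: continuous_mulf; [exact: cst_continuous | exact: w_cont].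
Qed.

Lemma lagrangian_shift x l h i :
  lagrangian x (h *: delta_mx 0 i + l) = lagrangian x l + h * w i x.
Proof.
rewrite /lagrangian -addrA; congr (_ + _).
under eq_bigr do rewrite !mxE mulrDl.
rewrite big_split /= addrC; congr (_ + _).
rewrite (bigD1 i) //= eqxx mulr1 big1 ?addr0 // => j /negPf ji.
by rewrite ji mulr0 !mul0r.
Qed.

Variables (lam : 'rV[R]_m) (x0 : T).
Hypotheses (K_x0 : K x0)
  (x0_max : forall x, K x -> lagrangian x lam <= lagrangian x0 lam)
  (x0_unique : forall x, K x -> lagrangian x lam = lagrangian x0 lam -> x = x0).

Lemma dual_has_sup l : has_sup [set lagrangian x l | x in K].
Proof.
have [y _ y_max] := compact_EVT_max (ex_intro _ x0 K_x0) K_compact (continuous_lagrangian l).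
split; first by exists (lagrangian x0 l), x0.
by exists (lagrangian y l) => _ [x Kx <-]; apply: y_max; rewrite inE.
Qed.

Lemma le_dual l x : K x -> lagrangian x l <= dual_fun l.
Proof. by move=> Kx; apply: sup_upper_bound (dual_has_sup l) _ _; exists x. Qed.

Lemma dual_argmax : dual_fun lam = lagrangian x0 lam.
Proof.
apply/eqP; rewrite eq_le le_dual // andbT.
by apply: ge_sup; [exists (lagrangian x0 lam), x0 | move=> _ [x Kx <-]; exact: x0_max].
Qed.

Let continuous_w_dev i : {within K, continuous (fun x => `|w i x - w i x0|)}.
Proof.
move=> x; apply: (@continuous_comp (subspace K) _ _ (fun x => w i x - w i x0)).
  by apply: continuous_addf; [exact: w_cont | exact: cst_continuous].
apply: norm_continuous.
Qed.

Lemma w_dev_bounded i : exists B, forall x, K x -> `|w i x - w i x0| <= B.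
Proof.
have [y _ y_max] := compact_EVT_max (ex_intro _ x0 K_x0) K_compact (continuous_w_dev i).
by exists `|w i y - w i x0| => x Kx; apply: y_max; rewrite inE.
Qed.

Lemma near_argmax_close i e : 0 < e -> exists2 d, 0 < d &
  forall x, K x -> dual_fun lam - d < lagrangian x lam -> `|w i x - w i x0| < e.
Proof.
move=> e_gt0; set F := [set x | e <= `|w i x - w i x0|].
have [FK_empty|/set0P FK_neq0] := eqVneq (F `&` K) set0.
  exists 1 => // x Kx _; rewrite ltNge; apply/negP => Fx.
  by have : (F `&` K) x by []; rewrite FK_empty.
have FK_compact : compact (F `&` K).
  apply/(@compact_subspaceIP T K F).
  have K_compact' : compact (K : set (subspace K)).
    by have := (@compact_subspaceIP T K setT).2; rewrite setTI; apply.
  apply: (subclosed_compact _ K_compact' (@subIsetr _ F K)).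
  apply: closedI; last exact: closed_subspaceT.
  exact: (continuous_closedP _).1 (continuous_w_dev i) _ (@closed_ge R e).
have [y] := compact_EVT_max FK_neq0 FK_compact
  (continuous_subspaceW (@subIsetr _ F K) (continuous_lagrangian lam)).
rewrite inE => -[Fy Ky] y_max.
have y_lt : lagrangian y lam < lagrangian x0 lam.
  rewrite lt_neqAle x0_max // andbT; apply/eqP => /(x0_unique y Ky) y_eq.
  by move: Fy; rewrite /F /= y_eq subrr normr0 leNgt e_gt0.
exists (lagrangian x0 lam - lagrangian y lam); first by rewrite subr_gt0.
move=> x Kx; rewrite dual_argmax opprB addrC subrK => lt_x.
rewrite ltNge; apply/negP => Fx.
by have := y_max x; rewrite inE => /(_ (conj Fx Kx)); rewrite leNgt lt_x.
Qed.

Lemma dual_shift_sandwich i h : h != 0 ->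
  let D := dual_fun (h *: delta_mx 0 i + lam) - dual_fun lam in
  exists2 x, K x & [/\ h * w i x0 <= D, D < h * (w i x + h)
                    & dual_fun lam - lagrangian x lam < h * (w i x - w i x0 + h)].
Proof.
move=> h_neq0 D.
have lower : lagrangian x0 lam + h * w i x0 <= dual_fun (h *: delta_mx 0 i + lam).
  by rewrite -lagrangian_shift le_dual.
(* An h^2-approximate maximizer: the tolerance is o(h), so it vanishes in the quotient. *)
have h2_gt0 : 0 < h ^+ 2 by rewrite exprn_even_gt0.
have [_ [x Kx <-]] := sup_adherent h2_gt0 (dual_has_sup (h *: delta_mx 0 i + lam)).
rewrite lagrangian_shift -/(dual_fun _) => upper.
have := le_dual lam x Kx; rewrite /D dual_argmax in lower upper * => x_le.
exists x => //; rewrite !mulrDr -expr2; split; lra.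
Qed.

Lemma derive_dual i : 'D_(delta_mx 0 i) dual_fun lam = w i x0.
Proof.
apply: cvg_lim => //; apply/cvgrPdist_le => e e_gt0.
have [B w_le] := w_dev_bounded i.
have e2_gt0 : 0 < e / 2 by rewrite divr_gt0.
have [d d_gt0 close] := near_argmax_close i _ e2_gt0.
have B_ge0 : 0 <= B by apply: le_trans (w_le x0 K_x0); rewrite normr_ge0.
near=> h.
have h_neq0 : h != 0 by near: h; exact: nbhs_dnbhs_neq.
have : `|h| < Num.min (e / 2) (Num.min 1 (d / (B + 1))).
  by near: h; apply: dnbhs0_lt; rewrite !lt_min e2_gt0 ltr01 divr_gt0 //; lra.
rewrite !lt_min => /and3P[h_lt_e h_lt1 h_lt_d].
have [x Kx [lower upper near_max]] := dual_shift_sandwich i h h_neq0.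
have x_close : `|w i x - w i x0| < e / 2.
  have B1_gt0 : 0 < B + 1 by lra.
  have step_le : h * (w i x - w i x0 + h) <= `|h| * (B + 1).
    rewrite (le_trans (ler_norm _)) // normrM ler_wpM2l // (le_trans (ler_normD _ _)) //.
    by apply: lerD; [exact: w_le | exact: ltW].
  rewrite ltr_pdivlMr // in h_lt_d.
  by apply: close => //; lra.
rewrite /= distrC; apply: le_trans (ltW (difference_quotient_lt h_neq0 lower upper)) _.
rewrite addrAC (le_trans (ler_normD _ _)) // [e]splitr.
by apply: lerD; exact: ltW.
Unshelve. all: by end_near.
Qed.

End danskin.

Lemma grad_dual {R : realType} {S A : finType} {m : nat} (P : S -> A -> S -> R)
    (gamma : R) (rho : S -> R) (r0 : S -> A -> R) (r : 'I_m -> S -> A -> R)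
    (c : 'rV[R]_m) (tau : R) (lam : 'rV[R]_m) (pil : S -> A -> R) :
  is_kernel P -> 0 < gamma -> gamma < 1 -> is_distr rho -> is_policy pil ->
  (forall pi, is_policy pi ->
     lagr P gamma rho r0 r c tau pi lam <= lagr P gamma rho r0 r c tau pil lam) ->
  (forall pi, is_policy pi ->
     lagr P gamma rho r0 r c tau pi lam = lagr P gamma rho r0 r c tau pil lam -> pi = pil) ->
  grad (dual P gamma rho r0 r c tau) lam = \row_i (value P gamma rho pil (r i) - c 0 i).
Proof.
move=> P_kernel gamma_gt0 gamma_lt1 rho_distr pil_pol pil_max pil_unique.
pose f (p : policy_space) := value P gamma rho p r0 + tau * entropy P gamma rho p.
pose w i (p : policy_space) := value P gamma rho p (r i) - c 0 i.
have lagrE p l : lagr P gamma rho r0 r c tau p l = lagrangian f w p l.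
  by rewrite /lagr /lagrangian addrAC.
have -> : dual P gamma rho r0 r c tau = dual_fun policies f w.
  by apply/funext => l; congr sup; apply: eq_imagel => p _; exact: lagrE.
apply/matrixP => ? i; rewrite !mxE; apply: derive_dual => //.
- exact: compact_policies.
- apply: continuous_addf; first exact: continuous_value.
  by apply: continuous_mulf; [exact: cst_continuous | exact: continuous_entropy].
- by move=> j; apply: continuous_addf; [exact: continuous_value | exact: cst_continuous].
- by move=> p pP; rewrite -!lagrE; exact: pil_max.
- by move=> p pP; rewrite -!lagrE; exact: pil_unique.
Qed.

Theorem lemma6 (R : realType) (S A : finType) (m : nat)
  (P : S -> A -> S -> R) (gamma : R) (rho : S -> R)
  (r0 : S -> A -> R) (r : 'I_m -> S -> A -> R) (c : 'rV[R]_m)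
  (xi tau : R) (pi_xi pistar : S -> A -> R) (lam : 'rV[R]_m) :
  is_kernel P -> 0 < gamma < 1 -> is_distr rho ->
  (forall s a, 0 < r0 s a) -> (forall i s a, 0 < r i s a) ->
  (* Slater condition *)
  0 < xi -> is_policy pi_xi ->
  (forall i, c 0 i + xi <= value P gamma rho pi_xi (r i)) ->
  let B := (\big[Num.max/0]_(p : S * A) r0 p.1 p.2 + ln (#|A|%:R : R))
           / ((1 - gamma) * xi) in
  let inLambda := fun l : 'rV[R]_m =>
    (forall i, 0 <= l 0 i) /\ \sum_i `|l 0 i| <= B in
  0 < tau ->
  (* unique maximizer of L_tau(., l) for every l in Lambda *)
  (forall l, inLambda l ->
     exists pil, is_policy pil /\
       (forall pi, is_policy pi ->
          lagr P gamma rho r0 r c tau pi l <= lagr P gamma rho r0 r c tau pil l) /\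
       (forall pi', is_policy pi' ->
          (forall pi, is_policy pi ->
             lagr P gamma rho r0 r c tau pi l <= lagr P gamma rho r0 r c tau pi' l) ->
          pi' = pil)) ->
  (* pistar is an optimal policy of the CMDP *)
  is_policy pistar ->
  (forall i, c 0 i <= value P gamma rho pistar (r i)) ->
  (forall pi, is_policy pi -> (forall i, c 0 i <= value P gamma rho pi (r i)) ->
     value P gamma rho pi r0 <= value P gamma rho pistar r0) ->
  inLambda lam ->
  forall pil : S -> A -> R, is_policy pil ->
  (forall pi, is_policy pi ->
     lagr P gamma rho r0 r c tau pi lam <= lagr P gamma rho r0 r c tau pil lam) ->
  let g := grad (dual P gamma rho r0 r c tau) lam in
  value P gamma rho pistar r0 - value P gamma rho pil r0
    <= \sum_(i < m) lam 0 i * g 0 i + tau * entropy P gamma rho pil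
  /\ norm2 (\row_i pos_part (c 0 i - value P gamma rho pil (r i)))
     = norm2 (\row_i pos_part (- g 0 i)).
Proof.
move=> P_kernel /andP[gamma_gt0 gamma_lt1] rho_distr _ _ _ _ _ B inLambda tau_gt0
  argmax_unique pistar_pol pistar_feas _ lam_in pil pil_pol pil_max g.
have pil_unique pi : is_policy pi ->
    lagr P gamma rho r0 r c tau pi lam = lagr P gamma rho r0 r c tau pil lam -> pi = pil.
  move=> pi_pol L_eq; have [pil0 [_ [_ argmax_eq]]] := argmax_unique lam lam_in.
  rewrite (argmax_eq pil) // (argmax_eq pi) // => q q_pol.
  by rewrite L_eq; exact: pil_max.
have gE : g = \row_i (value P gamma rho pil (r i) - c 0 i) by exact: grad_dual.
split; last by congr norm2; apply/matrixP => ? i; rewrite gE !mxE opprB.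
under eq_bigr do rewrite gE mxE.
have := pil_max pistar pistar_pol; rewrite /lagr.
have : 0 <= \sum_j lam 0 j * (value P gamma rho pistar (r j) - c 0 j).
  by apply: sumr_ge0 => j _; rewrite mulr_ge0 ?subr_ge0 //; exact: lam_in.1.
have : 0 <= tau * entropy P gamma rho pistar.
  by apply: mulr_ge0; [exact: ltW | exact: entropy_ge0].
lra.
Qed.
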